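(* Let $V$ be a real Lorentzian vector space (signature $(1,q)$) of dimension $m=1+q\ge3$, and let $\nabla R$ be a covariant derivative algebraic curvature tensor on $V$. If $\operatorname{trace}\{\mathcal{S}_{\nabla R}(x)^2\}$ is constant for $x\in S^+(V)$ and constant for $x\in S^-(V)$, then $\nabla R=0$.
   Context: A covariant derivative algebraic curvature tensor is $\nabla R\in\otimes^5V^*$ satisfying $\nabla R(a,b,c,d;e)=-\nabla R(b,a,c,d;e)=\nabla R(c,d,a,b;e)$, $\nabla R(a,b,c,d;e)+\nabla R(a,c,d,b;e)+\nabla R(a,d,b,c;e)=0$, and $\nabla R(a,b,c,d;e)+\nabla R(a,b,d,e;c)+\nabla R(a,b,e,c;d)=0$. The Szab\'o operator is defined by $(\mathcal{S}_{\nabla R}(x)y,w)=\nabla R(y,x,x,w;x)$. $S^\pm(V)=\{v\in V:(v,v)=\pm1\}$. *)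

From HB Require Import structures.
From mathcomp Require Import all_boot all_order all_algebra.
From mathcomp Require Import reals ring.
Set Implicit Arguments. Unset Strict Implicit. Unset Printing Implicit Defensive.
Import Order.TTheory GRing.Theory Num.Theory.
Local Open Scope ring_scope.

(* The Lorentzian vector space R^{1,q}: V = 'rV[R]_(q.+1) with the inner product
   (u,v) = - u_0 v_0 + u_1 v_1 + ... + u_q v_q  (signature (1,q)). *)
Definition leps {R : realType} {q : nat} (i : 'I_q.+1) : R :=
  if i == ord0 then -1 else 1.

Definition lip {R : realType} {q : nat} (u v : 'rV[R]_q.+1) : R :=
  \sum_(i < q.+1) leps i * u 0 i * v 0 i.

Definition tensor5 (R : realType) (m : nat) :=
  'I_m -> 'I_m -> 'I_m -> 'I_m -> 'I_m -> R.

Definition tev {R : realType} {m : nat} (T : tensor5 R m)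
  (a b c d e : 'rV[R]_m) : R :=
  \sum_(i < m) \sum_(j < m) \sum_(k < m) \sum_(l < m) \sum_(n < m)
    T i j k l n * a 0 i * b 0 j * c 0 k * d 0 l * e 0 n.

Definition is_cov_deriv_act {R : realType} {m : nat} (T : tensor5 R m) : Prop :=
  forall a b c d e : 'rV[R]_m,
    [/\ tev T a b c d e = - tev T b a c d e,
        tev T a b c d e = tev T c d a b e,
        tev T a b c d e + tev T a c d b e + tev T a d b c e = 0
      & tev T a b c d e + tev T a b d e c + tev T a b e c d = 0].

Definition evec {R : realType} {m : nat} (j : 'I_m) : 'rV[R]_m := delta_mx 0 j.

(* Szabo operator S(x) : V -> V, as a matrix acting on row vectors y |-> y *m S(x),
   characterised by (S(x) y, w) = nablaR(y, x, x, w; x)  (see szaboP). *)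
Definition szabo {R : realType} {q : nat} (T : tensor5 R q.+1)
  (x : 'rV[R]_q.+1) : 'M[R]_q.+1 :=
  \matrix_(j, i) (leps i * tev T (evec j) x x (evec i) x).

Lemma tev_e1 (R : realType) m (T : tensor5 R m) j b c (d : 'rV_m) e :
  tev T (evec j) b c d e = \sum_(k < m) \sum_(l < m) \sum_(n < m) \sum_(p < m)
    T j k l n p * b 0 k * c 0 l * d 0 n * e 0 p.
Proof.
rewrite /tev (bigD1 j) //= [X in _ + X]big1 ?addr0.
  apply: eq_bigr => k _; apply: eq_bigr => l _; apply: eq_bigr => n _; apply: eq_bigr => p _.
  by rewrite /evec mxE !eqxx mulr1.
move=> i ij.
rewrite big1 // => ? _; rewrite big1 // => ? _; rewrite big1 // => ? _;
  rewrite big1 // => ? _; rewrite /evec mxE eqxx /= (negbTE ij) /=.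
by rewrite !mulr0 !mul0r.
Qed.

Lemma tev_e14 (R : realType) m (T : tensor5 R m) j b c i e :
  tev T (evec j) b c (evec i) e = \sum_(k < m) \sum_(l < m) \sum_(p < m)
    T j k l i p * b 0 k * c 0 l * e 0 p.
Proof.
rewrite tev_e1; apply: eq_bigr => k _; apply: eq_bigr => l _.
rewrite (bigD1 i) //= [X in _ + X]big1 ?addr0.
  by apply: eq_bigr => p _; rewrite /evec mxE !eqxx mulr1.
move=> n ni; apply: big1 => p _; rewrite /evec mxE eqxx /= (negbTE ni).
by rewrite mulr0 mul0r.
Qed.

Lemma szaboP (R : realType) q (T : tensor5 R q.+1) (x y w : 'rV[R]_q.+1) :
  lip (y *m szabo T x) w = tev T y x x w x.
Proof.
have e2 : forall i : 'I_q.+1, leps i * leps i = 1 :> R.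
  by move=> i; rewrite /leps; case: (i == ord0); rewrite ?mulrNN mulr1.
rewrite /lip /tev.
under eq_bigr => i _ do rewrite mxE big_distrr /= big_distrl /=.
rewrite exchange_big /=; apply: eq_bigr => j _.
transitivity (\sum_(i < q.+1) \sum_(k < q.+1) \sum_(l < q.+1) \sum_(p < q.+1)
   T j k l i p * y 0 j * x 0 k * x 0 l * w 0 i * x 0 p).
  apply: eq_bigr => i _; rewrite mxE tev_e14.
  set S := \sum_(k < q.+1) _.
  have -> : leps i * (y 0 j * (leps i * S)) * w 0 i =
            (leps i * leps i) * (y 0 j * w 0 i * S) by ring.
  rewrite e2 mul1r /S big_distrr; apply: eq_bigr => k _.
  rewrite big_distrr; apply: eq_bigr => l _.
  rewrite big_distrr; apply: eq_bigr => p _.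

rewrite /=; ring.
rewrite exchange_big; apply: eq_bigr => k _.
by rewrite exchange_big.
Qed.

From HB Require Import structures.
From mathcomp Require Import all_boot all_order all_algebra.
From mathcomp Require Import reals ring lra.
Set Implicit Arguments. Unset Strict Implicit. Unset Printing Implicit Defensive.
Import Order.TTheory GRing.Theory Num.Theory.
Local Open Scope ring_scope.

(** For a unit timelike vector x, the Szabo operator S(x) is self-adjoint, kills x
    and preserves the spacelike hyperplane x^perp, on which the metric is positive
    definite.  Cauchy-Schwarz then gives
    nablaR(v,x,x,v;x)^2 <= tr S(x)^2 (v,v)^2 for v in x^perp.  Boosting x in the
    plane of x and a unit v in x^perp turns the left side into the square of
    r A + B / r (r = e^theta), which stays bounded only if A = B = 0; hence
    nablaR(u,x,x,u;x) = 0 for every timelike x and every u.  This cubic form in x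
    vanishes on an open cone, so its polarization vanishes identically, and the
    Bianchi identities recover nablaR from that polarization. *)

Section RealInequalities.
Variable R : realFieldType.

Lemma sqr_le_mul_of_quadratic_ge0 (b t w : R) :
  (forall al be : R, 0 <= al ^+ 2 * b + 2 * al * be * t + be ^+ 2 * w) ->
  t ^+ 2 <= b * w.
Proof.
move=> quad_ge0; have w_ge0 : 0 <= w by have := quad_ge0 0 1; lra.
have [w0|w_neq0] := eqVneq w 0; last first.
  have := quad_ge0 w (- t).
  have -> : w ^+ 2 * b + 2 * w * - t * t + (- t) ^+ 2 * w = w * (b * w - t ^+ 2) by ring.
  by rewrite pmulr_rge0 ?lt0r ?w_neq0 // subr_ge0.
have [->|t_neq0] := eqVneq t 0; first by rewrite w0 expr0n mulr0.
have := quad_ge0 1 (- (b + 1) / (2 * t)).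
have -> : 2 * 1 * (- (b + 1) / (2 * t)) * t = - (b + 1) by field; rewrite t_neq0.
rewrite w0 mulr0 addr0 expr1n mul1r; lra.
Qed.

Lemma bounded_mul_add_div_eq0 (p q K : R) :
  (forall r, 0 < r -> (r * p + q / r) ^+ 2 <= K) -> p = 0 /\ q = 0.
Proof.
have coef_eq0 (p' q' : R) : (forall r, 0 < r -> (r * p' + q' / r) ^+ 2 <= K) -> p' = 0.
  move=> bounded; have [//|p'_neq0] := eqVneq p' 0; exfalso.
  set z := K - 2 * p' * q'.
  have z1_gt0 : 0 < z ^+ 2 + 1 by have := sqr_ge0 z; lra.
  set r := (z ^+ 2 + 1) / `|p'|.
  have r_gt0 : 0 < r by rewrite divr_gt0 ?normr_gt0.
  have := bounded r r_gt0.
  have -> : (r * p' + q' / r) ^+ 2 = r ^+ 2 * p' ^+ 2 + 2 * p' * q' + q' ^+ 2 / r ^+ 2.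
    by field; rewrite gt_eqF.
  have -> : r ^+ 2 * p' ^+ 2 = (z ^+ 2 + 1) ^+ 2.
    rewrite /r -(real_normK (num_real p')); field; by rewrite normr_eq0.
  have : 0 <= q' ^+ 2 / r ^+ 2 by rewrite divr_ge0 ?sqr_ge0.
  have : z < (z ^+ 2 + 1) ^+ 2 by nra.
  rewrite /z; lra.
move=> bounded; split; first exact: coef_eq0 bounded.
apply: (coef_eq0 q p) => r r_gt0.
have := bounded r^-1; rewrite invr_gt0 => /(_ r_gt0).
by rewrite invrK mulrC [q * r]mulrC addrC.
Qed.
End RealInequalities.

Section TraceForm.
Variables (R : realFieldType) (n : nat).
Implicit Types (H L X Y : 'M[R]_n).

Definition trace_form H X Y := \tr (X *m H *m Y *m H).

Lemma trace_formC H X Y : trace_form H X Y = trace_form H Y X.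
Proof. by rewrite /trace_form -[X *m H *m Y *m H]mulmxA mxtrace_mulC !mulmxA. Qed.

Lemma trace_formDl H X X' Y :
  trace_form H (X + X') Y = trace_form H X Y + trace_form H X' Y.
Proof. by rewrite /trace_form !mulmxDl mxtraceD. Qed.

Lemma trace_formZl H (a : R) X Y : trace_form H (a *: X) Y = a * trace_form H X Y.
Proof. by rewrite /trace_form -!scalemxAl mxtraceZ. Qed.

Lemma trace_formDr H X Y Y' :
  trace_form H X (Y + Y') = trace_form H X Y + trace_form H X Y'.
Proof. by rewrite !(trace_formC _ X) trace_formDl. Qed.

Lemma trace_formZr H (a : R) X Y : trace_form H X (a *: Y) = a * trace_form H X Y.
Proof. by rewrite !(trace_formC _ X) trace_formZl. Qed.

Lemma trace_form_rank1 H X (w : 'rV[R]_n) : H^T = H ->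
  trace_form H X (w^T *m w) = (w *m H *m X *m (w *m H)^T) 0 0.
Proof.
move=> H_sym; rewrite /trace_form !mulmxA -(mulmxA _ w) mxtrace_mulC trace_mx11.
by rewrite trmx_mul H_sym !mulmxA.
Qed.

Lemma trace_form_ge0 L X : X^T = X -> 0 <= trace_form (L^T *m L) X X.
Proof.
move=> X_sym; set M := L *m X *m L^T.
have M_sym : M^T = M by rewrite /M !trmx_mul trmxK X_sym mulmxA.
have -> : trace_form (L^T *m L) X X = \tr (M *m M).
  by rewrite /trace_form /M !mulmxA mxtrace_mulC !mulmxA.
rewrite /mxtrace; apply: sumr_ge0 => i _; rewrite mxE; apply: sumr_ge0 => j _.
by rewrite -{2}M_sym [M^T j i]mxE -expr2 sqr_ge0.
Qed.

Lemma trace_form_cauchy_schwarz L X Y : X^T = X -> Y^T = Y ->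
  trace_form (L^T *m L) X Y ^+ 2 <=
  trace_form (L^T *m L) X X * trace_form (L^T *m L) Y Y.
Proof.
move=> X_sym Y_sym; apply: sqr_le_mul_of_quadratic_ge0 => a b.
have := @trace_form_ge0 L (a *: X + b *: Y).
rewrite linearD !linearZ /= X_sym Y_sym => /(_ erefl).
rewrite !(trace_formDl, trace_formZl, trace_formDr, trace_formZr) (trace_formC _ Y X).
lra.
Qed.
End TraceForm.

Section Multilinear.
Variables (R : realType) (m : nat) (T : tensor5 R m).
Implicit Types (r : R) (a b c d e : 'rV[R]_m).

Local Ltac tev_multilinear :=
  rewrite /tev; do 5 (rewrite ?big_distrr -?big_split; apply: eq_bigr => ? _);
  rewrite !mxE /=; ring.

Lemma tevD1 a a' b c d e : tev T (a + a') b c d e = tev T a b c d e + tev T a' b c d e.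
Proof. tev_multilinear. Qed.
Lemma tevD2 a b b' c d e : tev T a (b + b') c d e = tev T a b c d e + tev T a b' c d e.
Proof. tev_multilinear. Qed.
Lemma tevD3 a b c c' d e : tev T a b (c + c') d e = tev T a b c d e + tev T a b c' d e.
Proof. tev_multilinear. Qed.
Lemma tevD4 a b c d d' e : tev T a b c (d + d') e = tev T a b c d e + tev T a b c d' e.
Proof. tev_multilinear. Qed.
Lemma tevD5 a b c d e e' : tev T a b c d (e + e') = tev T a b c d e + tev T a b c d e'.
Proof. tev_multilinear. Qed.

Lemma tevZ1 r a b c d e : tev T (r *: a) b c d e = r * tev T a b c d e.
Proof. tev_multilinear. Qed.
Lemma tevZ2 r a b c d e : tev T a (r *: b) c d e = r * tev T a b c d e.
Proof. tev_multilinear. Qed.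
Lemma tevZ3 r a b c d e : tev T a b (r *: c) d e = r * tev T a b c d e.
Proof. tev_multilinear. Qed.
Lemma tevZ4 r a b c d e : tev T a b c (r *: d) e = r * tev T a b c d e.
Proof. tev_multilinear. Qed.
Lemma tevZ5 r a b c d e : tev T a b c d (r *: e) = r * tev T a b c d e.
Proof. tev_multilinear. Qed.

Lemma tev_evec i j k l n :
  tev T (evec i) (evec j) (evec k) (evec l) (evec n) = T i j k l n.
Proof.
have sum_delta (F : 'I_m -> R) h : \sum_p F p * (evec h : 'rV[R]_m) 0 p = F h.
  rewrite (bigD1 h) //= big1 ?addr0 => [|p /negbTE php]; rewrite mxE ?eqxx ?mulr1 //.
  by rewrite php mulr0.
rewrite tev_e14.
under eq_bigr => ? _ do under eq_bigr => ? _ do rewrite sum_delta.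
by under eq_bigr => ? _ do rewrite sum_delta; rewrite sum_delta.
Qed.
End Multilinear.

Section CovariantDerivativeCurvature.
Variables (R : realType) (m : nat) (T : tensor5 R m).
Implicit Types (a b c d e u v x y z : 'rV[R]_m).

Definition szabo_polar u v x y z :=
  tev T u x y v z + tev T u y x v z + tev T u x z v y
  + tev T u z x v y + tev T u y z v x + tev T u z y v x.

Lemma szabo_polarC u v x y z : szabo_polar u v y x z = szabo_polar u v x y z.
Proof. rewrite /szabo_polar; ring. Qed.

Lemma szabo_polarCr u v x y z : szabo_polar u v x z y = szabo_polar u v x y z.
Proof. rewrite /szabo_polar; ring. Qed.

Lemma szabo_polarB u v x x' y z :
  szabo_polar u v (x - x') y z = szabo_polar u v x y z - szabo_polar u v x' y z.
Proof.
by rewrite -scaleN1r /szabo_polar !(tevD2, tevD3, tevD5, tevZ2, tevZ3, tevZ5); ring.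
Qed.

Lemma szabo_polar_diagE u a b c : szabo_polar u u a b c =
  tev T u (a + b + c) (a + b + c) u (a + b + c) - tev T u (a + b) (a + b) u (a + b)
  - tev T u (a + c) (a + c) u (a + c) - tev T u (b + c) (b + c) u (b + c)
  + tev T u a a u a + tev T u b b u b + tev T u c c u c.
Proof. rewrite /szabo_polar !(tevD2, tevD3, tevD5); ring. Qed.

Lemma szabo_polar_polarization u v x y z :
  2 * szabo_polar u v x y z =
  szabo_polar (u + v) (u + v) x y z - szabo_polar u u x y z - szabo_polar v v x y z
  + szabo_polar u v x y z - szabo_polar v u x y z.
Proof. rewrite /szabo_polar !(tevD1, tevD4); ring. Qed.

Hypothesis hT : is_cov_deriv_act T.

Lemma tev_skew12 a b c d e : tev T a b c d e = - tev T b a c d e.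
Proof. by case: (hT a b c d e). Qed.

Lemma tev_pair_sym a b c d e : tev T a b c d e = tev T c d a b e.
Proof. by case: (hT a b c d e). Qed.

Lemma tev_bianchi1 a b c d e : tev T a b c d e + tev T a c d b e + tev T a d b c e = 0.
Proof. by case: (hT a b c d e). Qed.

Lemma tev_bianchi2 a b c d e : tev T a b c d e + tev T a b d e c + tev T a b e c d = 0.
Proof. by case: (hT a b c d e). Qed.

Lemma tev_skew34 a b c d e : tev T a b c d e = - tev T a b d c e.
Proof. by rewrite tev_pair_sym tev_skew12 (tev_pair_sym d). Qed.

Lemma tev_diag12 a c d e : tev T a a c d e = 0.
Proof. by have := tev_skew12 a a c d e; lra. Qed.

Lemma tev_diag34 a b c e : tev T a b c c e = 0.
Proof. by have := tev_skew34 a b c c e; lra. Qed.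

Lemma tev_rev4 a b c d e : tev T a b c d e = tev T d c b a e.
Proof. by rewrite tev_pair_sym tev_skew12 tev_skew34 opprK. Qed.

Lemma tev_skew1234 a b c d e : tev T a b c d e = tev T b a d c e.
Proof. by rewrite tev_skew12 tev_skew34 opprK. Qed.

Lemma tev_bianchi2_swap a b c d e : tev T a b e d c + tev T a b c e d = tev T a b c d e.
Proof. by have := tev_bianchi2 a b e d c; rewrite (tev_skew34 a b d); lra. Qed.

Lemma tev_det12 (al be ga de : R) a b c d e :
  tev T (al *: a + be *: b) (ga *: a + de *: b) c d e = (al * de - be * ga) * tev T a b c d e.
Proof. rewrite !(tevD1, tevZ1, tevD2, tevZ2) !tev_diag12 (tev_skew12 b a); ring. Qed.

Lemma tev_det34 (al be ga de : R) a b c d e :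
  tev T c d (al *: a + be *: b) (ga *: a + de *: b) e = (al * de - be * ga) * tev T c d a b e.
Proof. rewrite !(tevD3, tevZ3, tevD4, tevZ4) !tev_diag34 (tev_skew34 _ _ b a); ring. Qed.

Lemma szabo_polar_sym u v x y z : szabo_polar v u x y z = szabo_polar u v x y z.
Proof. by rewrite /szabo_polar !(tev_rev4 v); ring. Qed.

(* On the left, the four terms with [z] in the derivative slot add up to half
   the right side; the second Bianchi identity turns the other eight, in pairs,
   into the other half. *)
Lemma szabo_polar_swap u v x y z :
  szabo_polar u v x y z + szabo_polar x y u v z =
  4 * (tev T u x y v z + tev T u y x v z).
Proof.
have := tev_bianchi2_swap u x y v z; have := tev_bianchi2_swap v x y u z.
have := tev_bianchi2_swap u y x v z; have := tev_bianchi2_swap v y x u z.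
have := tev_rev4 u z x v y; have := tev_rev4 u z y v x.
have := tev_rev4 v x y u z; have := tev_rev4 v y x u z.
have := tev_skew1234 x u v y z; have := tev_skew1234 x u z y v.
have := tev_skew1234 x v z y u; have := tev_pair_sym x v u y z.
have := tev_pair_sym x z u y v; have := tev_pair_sym x z v y u.
rewrite /szabo_polar; lra.
Qed.

(* With skew-symmetry in slots 2,3 and 3,4 the three terms of the first Bianchi
   identity coincide. *)
Lemma tev_eq0_of_skew23 :
  (forall a b c d e, tev T a b c d e = - tev T a c b d e) ->
  forall a b c d e, tev T a b c d e = 0.
Proof.
move=> skew23 a b c d e.
have := tev_bianchi1 a b c d e.
have := skew23 a b c d e; have := tev_skew34 a c b d e.
have := skew23 a c d b e; have := tev_skew34 a d c b e.
lra.
Qed.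

Lemma tev_eq0_of_szabo_polar :
  (forall u v x y z, szabo_polar u v x y z = 0) ->
  forall a b c d e, tev T a b c d e = 0.
Proof.
move=> polar0; apply: tev_eq0_of_skew23 => a b c d e.
have := szabo_polar_swap a d b c e; rewrite !polar0; lra.
Qed.
End CovariantDerivativeCurvature.

Section Lorentz.
Variables (R : realType) (q : nat).
Local Notation m := q.+1.
Implicit Types (u v w x : 'rV[R]_m).

Definition eta_mx : 'M[R]_m := diag_mx (\row_i leps i).

Lemma leps_sqr (i : 'I_m) : leps i * leps i = 1 :> R.
Proof. by rewrite /leps; case: (i == ord0); rewrite ?mulrNN mulr1. Qed.

Lemma eta_mx_sqr : eta_mx *m eta_mx = 1%:M.
Proof. by rewrite /eta_mx mulmx_diag; apply/matrixP => i j; rewrite !mxE leps_sqr. Qed.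

Lemma tr_eta_mx : eta_mx^T = eta_mx.
Proof. exact: tr_diag_mx. Qed.

Lemma lip_mx u v : u *m eta_mx *m v^T = (lip u v)%:M.
Proof.
apply/matrixP => i j; rewrite !ord1 /eta_mx mul_mx_diag !mxE eqxx mulr1n.
by apply: eq_bigr => k _; rewrite !mxE; ring.
Qed.

Lemma lipC u v : lip u v = lip v u.
Proof. by rewrite /lip; apply: eq_bigr => i _; ring. Qed.

Lemma lipDl u u' v : lip (u + u') v = lip u v + lip u' v.
Proof. by rewrite /lip -big_split; apply: eq_bigr => i _; rewrite mxE /=; ring. Qed.

Lemma lipZl (a : R) u v : lip (a *: u) v = a * lip u v.
Proof. by rewrite /lip big_distrr; apply: eq_bigr => i _; rewrite mxE /=; ring. Qed.

Lemma lipDr u v v' : lip u (v + v') = lip u v + lip u v'.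
Proof. by rewrite !(lipC u) lipDl. Qed.

Lemma lipZr (a : R) u v : lip u (a *: v) = a * lip u v.
Proof. by rewrite !(lipC u) lipZl. Qed.

Lemma lip_self x : lip x x = - x 0 ord0 ^+ 2 + \sum_(k | k != ord0) x 0 k ^+ 2.
Proof.
rewrite /lip (bigD1 ord0) //= /leps eqxx; congr (_ + _); first ring.
by apply: eq_bigr => k /negbTE ->; ring.
Qed.

Lemma timelike_unit_coord0_neq0 x : lip x x = -1 -> x 0 ord0 != 0.
Proof.
move=> x_unit; apply/eqP => x0; move: x_unit; rewrite lip_self x0 expr0n /= oppr0 add0r.
have : 0 <= \sum_(k | k != ord0) x 0 k ^+ 2 by apply: sumr_ge0 => k _; exact: sqr_ge0.
lra.
Qed.

(* The Gram matrix of [v |-> nablaR(v,x,x,v;x)] annihilates [x^T], so [eta_mx]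
   may be replaced by [shifted_eta x] in [tr S(x)^2]; for unit timelike [x] the
   latter is positive semidefinite, as the factorization [shifted_etaE] shows. *)
Definition shifted_eta x := eta_mx + x^T *m x.

Definition shifted_eta_factor x : 'M[R]_m := \matrix_(k, i)
  if k == ord0 then (if i == ord0 then (x 0 ord0 ^+ 2 - 1) / x 0 ord0 else x 0 i)
  else (if i == ord0 then x 0 k / x 0 ord0 else (k == i)%:R).

Lemma shifted_etaE x :
  lip x x = -1 -> shifted_eta x = (shifted_eta_factor x)^T *m shifted_eta_factor x.
Proof.
move=> x_unit; have x0_neq0 := timelike_unit_coord0_neq0 x_unit.
have space_sqr : \sum_(k | k != ord0) x 0 k ^+ 2 = x 0 ord0 ^+ 2 - 1.
  by have := lip_self x; rewrite x_unit; lra.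
apply/matrixP => i j; rewrite /shifted_eta /eta_mx !mxE big_ord1 !mxE (bigD1 ord0) //=.
rewrite !mxE eqxx /=.
under eq_bigr => k k_neq0 do rewrite !mxE (negbTE k_neq0).
have [->|i_neq0] := eqVneq i ord0; have [->|j_neq0] := eqVneq j ord0;
  rewrite ?eqxx ?(negbTE i_neq0) ?(negbTE j_neq0) /=.
- rewrite (eq_bigr (fun k => x 0 k ^+ 2 * (x 0 ord0)^-1 ^+ 2)); last by move=> k _; ring.
  by rewrite -mulr_suml space_sqr /leps eqxx mulr1n; field.
- rewrite (bigD1 j) //= eqxx mulr1 big1 ?addr0; last first.
    by move=> k /andP[_ /negbTE ->]; rewrite mulr0.
  by rewrite mulr0n add0r; field.
- rewrite (bigD1 i) //= eqxx mul1r big1 ?addr0; last first.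
    by move=> k /andP[_ /negbTE ->]; rewrite mul0r.
  by rewrite mulr0n add0r; field.
- rewrite (bigD1 i) //= eqxx mul1r big1 ?addr0; last first.
    by move=> k /andP[_ /negbTE ->]; rewrite mul0r.
  by rewrite /leps (negbTE i_neq0); case: (i == j); rewrite ?mulr1n ?mulr0n; ring.
Qed.

Lemma tr_shifted_eta x : (shifted_eta x)^T = shifted_eta x.
Proof. by rewrite /shifted_eta linearD /= tr_eta_mx trmx_mul trmxK. Qed.

Lemma shifted_eta_perp x v : lip v x = 0 -> v *m eta_mx *m shifted_eta x = v.
Proof.
move=> v_perp; rewrite /shifted_eta mulmxDr -mulmxA eta_mx_sqr mulmx1 mulmxA lip_mx.
by rewrite v_perp mul_scalar_mx scale0r addr0.
Qed.

Lemma lip_perp_timelike_ge0 x s : lip x x = -1 -> lip s x = 0 -> 0 <= lip s s.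
Proof.
move=> x_unit s_perp; set y := s *m eta_mx *m (shifted_eta_factor x)^T.
have -> : lip s s = (y *m y^T) 0 0.
  have -> : y *m y^T = s *m eta_mx *m shifted_eta x *m eta_mx *m s^T.
    by rewrite shifted_etaE // /y !trmx_mul trmxK tr_eta_mx !mulmxA.
  by rewrite shifted_eta_perp // lip_mx mxE eqxx mulr1n.
rewrite mxE; apply: sumr_ge0 => i _; rewrite [y^T _ _]mxE -expr2; exact: sqr_ge0.
Qed.

Definition l1_cone v := \sum_(k | k != ord0) `|v 0 k| < v 0 ord0.

Lemma l1_cone_timelike v : l1_cone v -> lip v v < 0.
Proof.
rewrite /l1_cone lip_self => v_cone.
have space_le : \sum_(k | k != ord0) v 0 k ^+ 2 <= (\sum_(k | k != ord0) `|v 0 k|) ^+ 2.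
  rewrite expr2 mulr_suml; apply: ler_sum => i i_neq0.
  rewrite mulr_sumr (bigD1 i) //= -expr2 real_normK ?num_real // lerDl.
  by apply: sumr_ge0 => j _; rewrite mulr_ge0.
have : (\sum_(k | k != ord0) `|v 0 k|) ^+ 2 < v 0 ord0 ^+ 2.
  by rewrite ltr_pXn2r ?nnegrE ?sumr_ge0 // (le_trans _ (ltW v_cone)) ?sumr_ge0.
lra.
Qed.

Lemma l1_coneD v w : l1_cone v -> l1_cone w -> l1_cone (v + w).
Proof.
rewrite /l1_cone mxE => v_cone w_cone.
have : \sum_(k | k != ord0) `|(v + w) 0 k| <=
       \sum_(k | k != ord0) `|v 0 k| + \sum_(k | k != ord0) `|w 0 k|.
  by rewrite -big_split /=; apply: ler_sum => k _; rewrite mxE ler_normD.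
lra.
Qed.

Lemma l1_cone_sub v : exists p p', [/\ l1_cone p, l1_cone p' & v = p - p'].
Proof.
set k := 1 + \sum_i `|v 0 i|; set p' := k *: evec ord0 : 'rV[R]_m.
have k_gt : `|v 0 ord0| + \sum_(i | i != ord0) `|v 0 i| < k.
  by rewrite /k [X in _ < 1 + X](bigD1 ord0) //=; lra.
have p'_space : \sum_(i | i != ord0) `|p' 0 i| = 0.
  by rewrite big1 // => i /negbTE i_neq0; rewrite !mxE i_neq0 mulr0 normr0.
exists (v + p'), p'; split; last by rewrite addrK.
- rewrite /l1_cone !mxE eqxx mulr1.
  under eq_bigr => i /negbTE i_neq0 do rewrite !mxE i_neq0 mulr0 addr0.
  by have := ler_norm (- v 0 ord0); rewrite normrN; lra.
- rewrite /l1_cone p'_space !mxE eqxx mulr1.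
  have : 0 <= \sum_(i | i != ord0) `|v 0 i| by apply: sumr_ge0.
  by have := normr_ge0 (v 0 ord0); lra.
Qed.
End Lorentz.
Arguments eta_mx {R q}.

Section SzaboTrace.
Variables (R : realType) (q : nat) (T : tensor5 R q.+1).
Local Notation m := q.+1.
Implicit Types (u v w x : 'rV[R]_m).

Definition szabo_gram x : 'M[R]_m := \matrix_(j, i) tev T (evec j) x x (evec i) x.

Lemma szaboE x : szabo T x = szabo_gram x *m eta_mx.
Proof. by apply/matrixP => j i; rewrite /szabo /eta_mx mul_mx_diag !mxE mulrC. Qed.

Lemma szabo_gram_form x v w : (v *m szabo_gram x *m w^T) 0 0 = tev T v x x w x.
Proof.
have -> : szabo_gram x = szabo T x *m eta_mx by rewrite szaboE -mulmxA eta_mx_sqr mulmx1.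
by rewrite -szaboP !mulmxA lip_mx mxE eqxx mulr1n.
Qed.

Hypothesis hT : is_cov_deriv_act T.

Lemma tr_szabo_gram x : (szabo_gram x)^T = szabo_gram x.
Proof. by apply/matrixP => i j; rewrite !mxE (tev_rev4 hT). Qed.

Lemma szabo_gram_tr x : szabo_gram x *m x^T = 0.
Proof.
apply/matrixP => j k; rewrite (ord1 k) [RHS]mxE.
have -> : (szabo_gram x *m x^T) j 0 = (row j (szabo_gram x *m x^T)) 0 0 by rewrite [RHS]mxE.
by rewrite rowE mulmxA szabo_gram_form (tev_diag34 hT).
Qed.

Lemma trace_szabo_sqr x : \tr (szabo T x *m szabo T x) =
  trace_form (shifted_eta x) (szabo_gram x) (szabo_gram x).
Proof.
have gram_eta : szabo_gram x *m eta_mx = szabo_gram x *m shifted_eta x.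
  by rewrite /shifted_eta mulmxDr mulmxA szabo_gram_tr mul0mx addr0.
by rewrite szaboE gram_eta /trace_form !mulmxA.
Qed.

Lemma szabo_form_cauchy_schwarz x v : lip x x = -1 -> lip v x = 0 ->
  tev T v x x v x ^+ 2 <= \tr (szabo T x *m szabo T x) * lip v v ^+ 2.
Proof.
move=> x_unit v_perp; have wH := shifted_eta_perp v_perp.
have vv : (v *m (v *m eta_mx)^T) = (lip v v)%:M.
  by rewrite trmx_mul tr_eta_mx mulmxA lip_mx.
have gram_W : trace_form (shifted_eta x) (szabo_gram x) ((v *m eta_mx)^T *m (v *m eta_mx))
    = tev T v x x v x.
  by rewrite trace_form_rank1 ?tr_shifted_eta // wH szabo_gram_form.
have W_W : trace_form (shifted_eta x) ((v *m eta_mx)^T *m (v *m eta_mx))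
    ((v *m eta_mx)^T *m (v *m eta_mx)) = lip v v ^+ 2.
  rewrite trace_form_rank1 ?tr_shifted_eta // wH !mulmxA vv mul_scalar_mx.
  by rewrite -!scalemxAl lip_mx !mxE eqxx mulr1n expr2.
rewrite trace_szabo_sqr -gram_W -W_W shifted_etaE //.
by apply: trace_form_cauchy_schwarz; rewrite ?tr_szabo_gram // trmx_mul trmxK.
Qed.
End SzaboTrace.

Section ConstantTimelikeTrace.
Variables (R : realType) (q : nat) (T : tensor5 R q.+1) (c : R).
Hypothesis hT : is_cov_deriv_act T.
Hypothesis trace_const :
  forall x, lip x x = -1 -> \tr (szabo T x *m szabo T x) = c.
Local Notation m := q.+1.
Implicit Types (s t u v x : 'rV[R]_m).

Lemma szabo_form_perp_unit t s :
  lip t t = -1 -> lip s s = 1 -> lip s t = 0 -> tev T s t t s t = 0.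
Proof.
move=> t_unit s_unit s_perp; have t_perp : lip t s = 0 by rewrite lipC.
set a := tev T s t t s t; set b := tev T s t t s s.
suff [] : (a + b) / 2 = 0 /\ (a - b) / 2 = 0 by lra.
apply: (bounded_mul_add_div_eq0 (K := c)) => r r_gt0.
have r_neq0 : r != 0 by rewrite gt_eqF.
(* With r = e^theta, [x] and [y] are the boosts of [t] and [s] by theta. *)
set ch := (r + r^-1) / 2; set sh := (r - r^-1) / 2.
have ch_sh : ch ^+ 2 - sh ^+ 2 = 1 by rewrite /ch /sh; field.
set x := ch *: t + sh *: s; set y := sh *: t + ch *: s.
have lip_ts : forall al be ga de, lip (al *: t + be *: s) (ga *: t + de *: s) = be * de - al * ga.
  by move=> *; rewrite !(lipDl, lipDr, lipZl, lipZr) t_unit s_unit s_perp t_perp; ring.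
have x_unit : lip x x = -1 by rewrite lip_ts; lra.
have y_perp : lip y x = 0 by rewrite lip_ts; ring.
have y_unit : lip y y = 1 by rewrite lip_ts; lra.
have := szabo_form_cauchy_schwarz hT x_unit y_perp.
rewrite trace_const // y_unit expr1n mulr1.
have -> : tev T y x x y x = ch * a + sh * b.
  rewrite (tev_det12 hT) (tev_det34 hT) tevD5 !tevZ5.
  rewrite (tev_skew12 hT t s t s t) (tev_skew12 hT t s t s s) -/a -/b.
  have -> : sh * sh - ch * ch = -1 by lra.
  have -> : ch * ch - sh * sh = 1 by lra.
  ring.
by have -> : ch * a + sh * b = r * ((a + b) / 2) + (a - b) / 2 / r by rewrite /ch /sh; field.
Qed.

Lemma szabo_form_perp t s : lip t t = -1 -> lip s t = 0 -> tev T s t t s t = 0.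
Proof.
move=> t_unit s_perp; have := lip_perp_timelike_ge0 t_unit s_perp.
rewrite le0r => /orP[/eqP s_null | s_pos].
  have := szabo_form_cauchy_schwarz hT t_unit s_perp.
  rewrite s_null expr0n mulr0 => le0.
  by apply/eqP; rewrite -sqrf_eq0 eq_le le0 sqr_ge0.
set k : R := Num.sqrt (lip s s).
have k_gt0 : 0 < k by rewrite sqrtr_gt0.
have k_sqr : k ^+ 2 = lip s s by rewrite sqr_sqrtr // ltW.
have s'_unit : lip (k^-1 *: s) (k^-1 *: s) = 1.
  by rewrite lipZl lipZr -k_sqr; field; rewrite gt_eqF.
have s'_perp : lip (k^-1 *: s) t = 0 by rewrite lipZl s_perp mulr0.
have := szabo_form_perp_unit t_unit s'_unit s'_perp.
by rewrite tevZ1 tevZ4 => /eqP; rewrite !mulf_eq0 invr_eq0 gt_eqF //= => /eqP.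
Qed.

Lemma szabo_form_timelike t u : lip t t < 0 -> tev T u t t u t = 0.
Proof.
move=> t_timelike; set k : R := Num.sqrt (- lip t t).
have k_gt0 : 0 < k by rewrite sqrtr_gt0 oppr_gt0.
have k_sqr : k ^+ 2 = - lip t t by rewrite sqr_sqrtr // oppr_ge0 ltW.
set t' := k^-1 *: t.
have t'_unit : lip t' t' = -1.
  by rewrite lipZl lipZr -[lip t t]opprK -k_sqr; field; rewrite gt_eqF.
have -> : t = k *: t' by rewrite scalerA mulfV ?gt_eqF ?scale1r.
clearbody t'.
set al := lip u t'; set s := u + al *: t'.
have s_perp : lip s t' = 0 by rewrite lipDl lipZl t'_unit /al; ring.
have -> : u = s + (- al) *: t' by rewrite /s scaleNr addrK.
clearbody s al.
rewrite !(tevZ2, tevZ3, tevZ5) !(tevD1, tevD4, tevZ1, tevZ4) !(tev_diag12 hT, tev_diag34 hT).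
by rewrite szabo_form_perp //; ring.
Qed.

Lemma szabo_polar_eq0_on_cone u x y z :
  l1_cone x -> l1_cone y -> l1_cone z -> szabo_polar T u u x y z = 0.
Proof.
move=> x_cone y_cone z_cone; have cone0 w : l1_cone w -> tev T u w w u w = 0.
  by move/l1_cone_timelike; exact: szabo_form_timelike.
by rewrite szabo_polar_diagE !cone0 ?l1_coneD //; ring.
Qed.

Lemma szabo_polar_diag_eq0 u x y z : szabo_polar T u u x y z = 0.
Proof.
have [px [px' [px_cone px'_cone ->]]] := l1_cone_sub x.
have [py [py' [py_cone py'_cone ->]]] := l1_cone_sub y.
have [pz [pz' [pz_cone pz'_cone ->]]] := l1_cone_sub z.
rewrite !szabo_polarB -!(szabo_polarC _ _ _ _ (_ - _)) !szabo_polarB.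
rewrite -!(szabo_polarCr _ _ _ _ _ (_ - _)) -!(szabo_polarC _ _ _ _ (_ - _)).
by rewrite !szabo_polarB !szabo_polar_eq0_on_cone //; ring.
Qed.

Lemma szabo_polar_eq0 u v x y z : szabo_polar T u v x y z = 0.
Proof.
have := szabo_polar_polarization T u v x y z.
by rewrite !szabo_polar_diag_eq0 (szabo_polar_sym hT); lra.
Qed.
End ConstantTimelikeTrace.

Theorem theorem1p6 (R : realType) (q : nat) (hq : (2 <= q)%N)
  (T : tensor5 R q.+1) (hT : is_cov_deriv_act T) :
  (exists c : R, forall x : 'rV[R]_q.+1, lip x x = 1 ->
      \tr (szabo T x *m szabo T x) = c) ->
  (exists c : R, forall x : 'rV[R]_q.+1, lip x x = -1 ->
      \tr (szabo T x *m szabo T x) = c) ->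
  forall i j k l n : 'I_q.+1, T i j k l n = 0.
Proof.
move=> _ [c trace_const] i j k l n.
rewrite -tev_evec; apply: (tev_eq0_of_szabo_polar hT) => u v x y z.
exact: szabo_polar_eq0 hT trace_const u v x y z.
Qed.
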